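(* Let $R$ be an involutive commutative semiring (with $0 \neq 1$), let $(K,\oplus,0)$ be a finite abelian group of order $d$ and exponent $k$, with $d$ invertible in $R$, and let $K$ be a subgroup of an abelian group $(P,\oplus,0)$ (in the paper: $K$ is the group of $X$-classical points, $P$ the group of $Z$-phases). Let $$\bigoplus_{r=1}^M n_r y_r = a, \qquad a \in K,$$ be an equation with positive integer coefficients $n_r$, admitting a solution $y_r := a_r$ in $P$, where the $a_r$ are pairwise distinct and non-zero. Choose $N \geq \sum_{r=1}^M n_r$ with $N \equiv 1 \pmod k$, set $n_0 := N - \sum_{r=1}^M n_r$, $a_0 := 0$, for $i = 1,\dots,N$ let $R(i)$ be the least $R' \geq 0$ with $i \leq \sum_{r=0}^{R'} n_r$, and put $\alpha_i := a_{R(i)}$; indices of $\alpha$ are read modulo $N$ with residues in $\{1,\dots,N\}$. Consider the measurement scenario with measurements $\mathcal{X} = \bigsqcup_{i=1}^N \{X_i^{0}, X_i^{a_1},\dots,X_i^{a_M}\}$, each with outcome set $K$, and measurement contexts $C_{control} = \{X_i^0 : i = 1,\dots,N\}$ and $C_{var_v} = \{X_i^{\alpha_{i+v-1}} : i=1,\dots,N\}$ for $v = 1,\dots,N$. Let $(e_C)$ be the $R$-valued empirical model (the outcome distribution of the Mermin measurement contexts on the $N$-partite GHZ state) given, for $\underline{b} \in K^C$, by $e_{C_{control}}(\underline{b}) = 1/d^{N-1}$ if $\bigoplus_{i} b_i = 0$ and $0$ otherwise, and $e_{C_{var_v}}(\underline{b}) = 1/d^{N-1}$ if $\bigoplus_i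 b_i = a$ and $0$ otherwise. Assume $R$ admits a semiring morphism $p: R \to \mathbb{B}$ with $p(1/d) = 1$. Then $(e_C)$ is $\mathrm{AvN}_{\mathbb{Z},K}$ if and only if the equation $\bigoplus_{r=1}^M n_r y_r = a$ admits no solution in $K$.
   Context: $\mathbb{B} = (\{0,1\},\vee,0,\wedge,1)$ is the boolean semiring. The possibilistic model associated with $(e_C)$ is $(p\circ e_C)$; its support on a context $C$ is $\mathcal{S}(C) := \{\underline{b} \in K^C : p(e_C(\underline{b})) = 1\}$. A $\mathbb{Z}$-linear equation valued in $K$ is a triple $\phi = (C, n, b)$ with $C$ a finite set, $n: C \to \mathbb{Z}$ and $b \in K$; an assignment $s: C \to K$ satisfies $\phi$ if $\bigoplus_{m \in C} n(m) s(m) = b$ in $K$. For a set $W$ of assignments $C \to K$, $\mathbb{T}_{\mathbb{Z}}(W)$ is the set of $\mathbb{Z}$-linear equations with index set $C$ satisfied by every $s \in W$. The model is $\mathrm{AvN}_{\mathbb{Z},K}$ (All-vs-Nothing) if there is no global assignment $s: \mathcal{X} \to K$ such that, for every context $C$ and every $\phi \in \mathbb{T}_{\mathbb{Z}}(\mathcal{S}(C))$, the restriction $s|_C$ satisfies $\phi$. *)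

From HB Require Import structures.
From mathcomp Require Import all_boot all_order all_algebra.
Set Implicit Arguments. Unset Strict Implicit. Unset Printing Implicit Defensive.
Import Order.TTheory GRing.Theory Num.Theory.
Local Open Scope ring_scope.

Definition semiring_involution (R : comNzSemiRingType) (star : R -> R) : Prop :=
  [/\ forall x, star (star x) = x,
      star 0 = 0, star 1 = 1,
      forall x y, star (x + y) = star x + star y
    & forall x y, star (x * y) = star x * star y].

Definition bool_semiring_morphism (R : comNzSemiRingType) (p : R -> bool) : Prop :=
  [/\ p 0 = false, p 1 = true,
      forall x y, p (x + y) = p x || p y
    & forall x y, p (x * y) = p x && p y].

Definition is_exponent (K : finZmodType) (k : nat) : Prop :=
  [/\ (0 < k)%N, forall x : K, x *+ k = 0
    & forall m, (0 < m)%N -> (forall x : K, x *+ m = 0) -> (k <= m)%N].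

Definition subgroup_embedding (K : finZmodType) (P : zmodType) (emb : K -> P) : Prop :=
  (forall x y, emb (x - y) = emb x - emb y) /\ injective emb.

Definition lin_sat (X : finType) (K : zmodType) (C : {set X})
    (n : {x : X | x \in C} -> int) (b : K) (s : {x : X | x \in C} -> K) : Prop :=
  \sum_(m : {x : X | x \in C}) (s m) *~ (n m) = b.

Definition support (X : finType) (K : zmodType) (R : comNzSemiRingType)
    (p : R -> bool) (C : {set X}) (eC : ({x : X | x \in C} -> K) -> R)
    (s : {x : X | x \in C} -> K) : Prop :=
  p (eC s) = true.

Definition theoryZ (X : finType) (K : zmodType) (C : {set X})
    (W : ({x : X | x \in C} -> K) -> Prop)
    (n : {x : X | x \in C} -> int) (b : K) : Prop :=
  forall s, W s -> lin_sat n b s.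

Definition AvN_Z (X : finType) (K : zmodType) (I : Type) (ctx : I -> {set X})
    (R : comNzSemiRingType) (p : R -> bool)
    (e : forall c : I, ({x : X | x \in ctx c} -> K) -> R) : Prop :=
  ~ exists s : X -> K,
      forall (c : I) (n : {x : X | x \in ctx c} -> int) (b : K),
        theoryZ (support p (e c)) n b ->
        lin_sat n b (fun m => s (val m)).

Arguments AvN_Z {X K I} ctx {R} p e.

(* n_r for r = 0..M, with n_0 := N - sum_{r=1}^M n_r ; the paper's n_r (r>=1)
   is here n (r-1) with n : 'I_M -> nat *)
Definition nfull (M : nat) (n : 'I_M -> nat) (N : nat) (r : nat) : nat :=
  if r is r'.+1 then oapp n 0%N (insub r') else (N - \sum_(q < M) n q)%N.

Definition Rsel (M : nat) (n : 'I_M -> nat) (N : nat) (i : nat) : nat :=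
  find (fun R' => (i <= \sum_(r < R'.+1) nfull n N r)%N) (iota 0 M.+1).

(* reading an index modulo N with residue in {1,...,N} *)
Definition modN (N i : nat) : nat := ((i.-1 %% N).+1)%N.

(* Measurements: X_i^{b}, site i = j+1 for j : 'I_N, and label l : 'I_M.+1
   where l = 0 stands for the label a_0 = 0 and l = r+1 for a_{r+1}.
   Contexts indexed by c : 'I_N.+1: c = 0 is C_control, c = v >= 1 is C_var_v. *)
Definition ghz_ctx (M : nat) (n : 'I_M -> nat) (N : nat) (c : 'I_N.+1)
    : {set 'I_N * 'I_M.+1} :=
  if c == ord0 then [set (j, ord0) | j : 'I_N]
  else [set (j, inord (Rsel n N (modN N (j.+1 + c - 1)))) | j : 'I_N].

Arguments ghz_ctx {M} n N c.

(* the empirical model: 1/d^{N-1} (dinv = 1/d) on outcomes whose sum is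
   0 (control) resp. a (var_v), and 0 otherwise *)
Definition ghz_model (R : comNzSemiRingType) (K : finZmodType) (dinv : R) (a : K)
    (M : nat) (n : 'I_M -> nat) (N : nat) (c : 'I_N.+1)
    (b : {x : 'I_N * 'I_M.+1 | x \in ghz_ctx n N c} -> K) : R :=
  if \sum_(m : {x : 'I_N * 'I_M.+1 | x \in ghz_ctx n N c}) b m
       == (if c == ord0 then 0 else a)
  then dinv ^+ N.-1 else 0.

Arguments ghz_model {R K} dinv a {M} n N c b.

From Pilot Require Import Defs.
From HB Require Import structures.
From mathcomp Require Import all_boot all_order all_algebra.
From mathcomp Require Import zify.
Import Order.TTheory GRing.Theory Num.Theory.
Local Open Scope ring_scope.

(* Since p(1/d) = 1, the support of each context is the set of outcomes with a
   prescribed sum (0 for the control context, a for the variable ones), and the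
   Z-linear theory of such a support is generated by that single equation. So
   the model fails to be AvN exactly when some global assignment s gives every
   context the right sum. Summing the N variable contexts, which are the
   cyclic rotations of one labelling, meets label r at each site n_r times;
   the control context kills label 0, so y_r := sum_i s(X_i^{a_r}) solves the
   equation with right-hand side N a = a, as N = 1 (mod k). Conversely a
   solution y in K yields the assignment X_i^{a_r} |-> y_r, X_i^0 |-> 0. *)

Definition cumsum (c : nat -> nat) (r : nat) : nat := (\sum_(q < r.+1) c q)%N.

Definition block (c : nat -> nat) (m j : nat) : nat :=
  find (fun r => (j <= cumsum c r)%N) (iota 0 m.+1).

Lemma leq_prefix_sum (c : nat -> nat) {x y : nat} :
  (x <= y)%N -> (\sum_(q < x) c q <= \sum_(q < y) c q)%N.
Proof.
move=> le_xy; rewrite (big_ord_widen y) // big_mkcond /=.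
by apply: leq_sum => i _; case: ifP.
Qed.

Lemma block_eq (c : nat -> nat) {m r j : nat} : (r <= m)%N ->
  (\sum_(q < r) c q < j <= \sum_(q < r) c q + c r)%N -> block c m j = r.
Proof.
move=> le_rm /andP[lo hi].
rewrite /block; have -> : m.+1 = (r + (m - r).+1)%N by rewrite addnS subnKC.
rewrite iotaD find_cat.
have -> : has (fun r' => (j <= cumsum c r')%N) (iota 0 r) = false.
  apply/hasPn => x; rewrite mem_iota add0n => /andP[_ lt_xr]; rewrite -ltnNge /cumsum.
  exact: leq_ltn_trans (leq_prefix_sum c lt_xr) lo.
by rewrite size_iota /= /cumsum big_ord_recr hi addn0.
Qed.

Lemma sum_block (V : zmodType) (f : nat -> V) (c : nat -> nat) (m r : nat) :
  (r <= m)%N ->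
  \sum_(0 <= i < cumsum c r) f (block c m i.+1) = \sum_(q < r.+1) f q *+ c q.
Proof.
have const_on_block q : (q <= m)%N ->
    \sum_(\sum_(q' < q) c q' <= i < \sum_(q' < q) c q' + c q) f (block c m i.+1)
    = f q *+ c q.
  move=> le_qm; rewrite (eq_big_nat _ _ (F2 := fun _ => f q)) ?sumr_const_nat ?addKn //.
  by move=> i /andP[lo hi]; rewrite (block_eq c le_qm) // ltnS lo.
elim: r => [|r IH] le_rm.
  by rewrite /cumsum !big_ord1 -(const_on_block 0%N) // big_ord0 add0n.
rewrite /cumsum big_ord_recr [RHS]big_ord_recr /= -IH ?(ltnW le_rm) //.
by rewrite (@big_cat_nat _ _ _ (cumsum c r)) ?leq_addr //= const_on_block.
Qed.

Lemma sum_rot_mod (V : zmodType) (h : nat -> V) (N x : nat) : (0 < N)%N ->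
  \sum_(j < N) h ((x + j) %% N)%N = \sum_(i < N) h i.
Proof.
case: N => [//|N] _.
rewrite [RHS](reindex_inj (addrI (inZp x : 'I_N.+1))).
by apply: eq_bigr => j _; rewrite /= modnDml.
Qed.

Lemma mulrn_eqmod {V : zmodType} {k : nat} (x : V) {m m' : nat} :
  (forall y : V, y *+ k = 0) -> m = m' %[mod k] -> x *+ m = x *+ m'.
Proof.
have mod_k l : (forall y : V, y *+ k = 0) -> x *+ l = x *+ (l %% k).
  by move=> kV; rewrite {1}(divn_eq l k) mulrnDr mulnC mulrnA kV mul0rn add0r.
by move=> kV eq_mm'; rewrite mod_k // eq_mm' -mod_k.
Qed.

Lemma bool_morphism_expr {R : comNzSemiRingType} {p : R -> bool} {x : R} (m : nat) :
  bool_semiring_morphism p -> p x = true -> p (x ^+ m) = true.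
Proof.
by case=> _ p1 _ pM px; elim: m => [|m IH]; rewrite ?expr0 ?exprS ?pM ?px ?IH.
Qed.

Lemma lin_sat_ones (X : finType) (K : zmodType) (C : {set X}) (b : K)
    (s : {x : X | x \in C} -> K) :
  lin_sat (fun _ => 1%R) b s <-> \sum_m s m = b.
Proof. by rewrite /lin_sat; under eq_bigr do rewrite mulr1z. Qed.

Lemma AvN_Z_sum_support {X : finType} {K : zmodType} {I : Type}
    {ctx : I -> {set X}} {R : comNzSemiRingType} {p : R -> bool}
    {e : forall c : I, ({x : X | x \in ctx c} -> K) -> R} {t : I -> K} :
  (forall c s, Defs.support p (e c) s <-> \sum_m s m = t c) ->
  AvN_Z ctx p e <->
  ~ exists s : X -> K, forall c, \sum_(m : {x | x \in ctx c}) s (val m) = t c.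
Proof.
move=> supp; apply: not_iff_compat; split=> -[s s_ok]; exists s.
  move=> c; have := s_ok c (fun _ => 1%R) (t c).
  by rewrite lin_sat_ones; apply=> s' /supp; rewrite lin_sat_ones.
by move=> c n b thy; apply/thy/supp/s_ok.
Qed.

Section GHZScenario.
Variables (M : nat) (n : 'I_M -> nat) (N : nat).
Hypothesis N_gt0 : (0 < N)%N.
Hypothesis sum_n_leq : (\sum_(r < M) n r <= N)%N.

Definition ghz_label (c : 'I_N.+1) (j : 'I_N) : 'I_M.+1 :=
  if c == ord0 then ord0 else inord (Rsel n N (modN N (j.+1 + c - 1))).

Definition ghz_target {K : zmodType} (a : K) (c : 'I_N.+1) : K :=
  if c == ord0 then 0 else a.

Lemma ghz_target_control {K : zmodType} (a : K) : ghz_target a ord0 = 0.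
Proof. by rewrite /ghz_target eqxx. Qed.

Lemma ghz_target_var {K : zmodType} (a : K) (v : 'I_N) : ghz_target a (lift ord0 v) = a.
Proof. by rewrite /ghz_target eq_sym (negbTE (neq_lift _ _)). Qed.

Lemma sum_ghz_ctx {V : zmodType} (c : 'I_N.+1) (F : 'I_N * 'I_M.+1 -> V) :
  \sum_(m : {x | x \in ghz_ctx n N c}) F (val m) = \sum_(j < N) F (j, ghz_label c j).
Proof.
rewrite -(big_sub (mem (ghz_ctx n N c))).
have -> : ghz_ctx n N c = [set (j, ghz_label c j) | j : 'I_N].
  by rewrite /ghz_ctx /ghz_label; case: (c == ord0).
by rewrite big_imset //= => x y _ _ [].
Qed.

Lemma ghz_label_control (j : 'I_N) : ghz_label ord0 j = ord0.
Proof. by rewrite /ghz_label eqxx. Qed.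

Lemma ghz_label_var (v j : 'I_N) :
  ghz_label (lift ord0 v) j = inord (Rsel n N ((v + j) %% N).+1).
Proof.
rewrite /ghz_label eq_sym (negbTE (neq_lift _ _)) /modN lift0 /=.
by congr (inord (Rsel n N (_ %% N).+1)); lia.
Qed.

Lemma sum_ghz_labels {V : zmodType} (F : 'I_M.+1 -> V) (x : nat) :
  \sum_(j < N) F (inord (Rsel n N ((x + j) %% N).+1)) =
  F ord0 *+ nfull n N 0 + \sum_(r < M) F (lift ord0 r) *+ n r.
Proof.
have nfullS (r : 'I_M) : nfull n N r.+1 = n r by rewrite /nfull /= valK.
have cumsum_full : cumsum (nfull n N) M = N.
  by rewrite /cumsum big_ord_recl; under eq_bigr do rewrite lift0 nfullS; apply: subnK.
rewrite (@sum_rot_mod V (fun i => F (inord (Rsel n N i.+1)))) //.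
(* [Rsel n N] is [block (nfull n N) M] by definition. *)
have := @sum_block V (fun r => F (inord r)) (nfull n N) M M (leqnn M).
rewrite cumsum_full big_mkord => ->.
rewrite big_ord_recl !inord_val; congr (_ + _).
by apply: eq_bigr => r _; rewrite inord_val lift0 nfullS.
Qed.

Variables (K : zmodType) (k : nat) (a : K).
Hypothesis k_annihilates : forall x : K, x *+ k = 0.
Hypothesis N_mod_k : N = 1 %[mod k].

Lemma ghz_assignment_solution (s : 'I_N * 'I_M.+1 -> K) :
  (forall c, \sum_(j < N) s (j, ghz_label c j) = ghz_target a c) ->
  \sum_(r < M) (\sum_(j < N) s (j, lift ord0 r)) *+ n r = a.
Proof.
move=> s_ok.
have control : \sum_(j < N) s (j, ord0) = 0.
  rewrite -[RHS](ghz_target_control a) -s_ok.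
  by under [RHS]eq_bigr do rewrite ghz_label_control.
have var (v : 'I_N) : \sum_(j < N) s (j, inord (Rsel n N ((v + j) %% N).+1)) = a.
  rewrite -[RHS](ghz_target_var a v) -s_ok.
  by under [RHS]eq_bigr do rewrite ghz_label_var.
have total : \sum_(v < N) \sum_(j < N) s (j, inord (Rsel n N ((v + j) %% N).+1)) = a.
  by rewrite (eq_bigr _ (fun v _ => var v)) sumr_const card_ord
             (mulrn_eqmod a k_annihilates N_mod_k) mulr1n.
rewrite -[RHS]total exchange_big /=.
under [RHS]eq_bigr => j _ do under eq_bigr do rewrite addnC.
under [RHS]eq_bigr do rewrite (sum_ghz_labels (fun l => s (_, l))).
rewrite big_split /= sumrMnl control mul0rn add0r exchange_big /=.
by apply: eq_bigr => r _; rewrite sumrMnl.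
Qed.

Lemma solution_ghz_assignment (y : 'I_M -> K) :
  \sum_(r < M) y r *+ n r = a ->
  forall c, \sum_(j < N) oapp y 0 (unlift ord0 (ghz_label c j)) = ghz_target a c.
Proof.
move=> sol c; case: (unliftP ord0 c) => [v ->|->].
  rewrite ghz_target_var -sol.
  under eq_bigr do rewrite ghz_label_var.
  rewrite (sum_ghz_labels (fun l => oapp y 0 (unlift ord0 l))) unlift_none mul0rn add0r.
  by under eq_bigr do rewrite liftK.
by rewrite ghz_target_control big1 // => j _; rewrite ghz_label_control unlift_none.
Qed.

End GHZScenario.

Arguments ghz_target {N K} a c.
Arguments sum_ghz_ctx {M n N V c} F.
Arguments ghz_assignment_solution {M n N} N_gt0 sum_n_leq {K k a} k_annihilates N_mod_k s.
Arguments solution_ghz_assignment {M n N} N_gt0 sum_n_leq {K a y}.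

Theorem mainTheorem2
    (R : comNzSemiRingType) (star : R -> R)
    (K : finZmodType) (k : nat) (P : zmodType) (emb : K -> P)
    (dinv : R) (p : R -> bool)
    (M : nat) (n : 'I_M -> nat) (a : K) (ar : 'I_M -> P) (N : nat) :
  semiring_involution star ->
  is_exponent K k ->
  #|K|%:R * dinv = 1 ->
  subgroup_embedding emb ->
  (forall r, (0 < n r)%N) ->
  injective ar ->
  (forall r, ar r != 0) ->
  \sum_(r < M) ar r *+ n r = emb a ->
  (0 < N)%N ->
  (\sum_(r < M) n r <= N)%N ->
  N = 1 %[mod k] ->
  bool_semiring_morphism p ->
  p dinv = true ->
  AvN_Z (ghz_ctx n N) p (ghz_model dinv a n N)
  <-> ~ (exists y : 'I_M -> K, \sum_(r < M) y r *+ n r = a).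
Proof.
(* The involution, the invertibility of d and the solution of the equation in
   P only make the scenario the paper's; the equivalence does not use them. *)
move=> _ [_ k_annihilates _] _ _ _ _ _ _ N_gt0 sum_n_leq N_mod_k p_morph p_dinv.
have supp c s : Defs.support p (ghz_model dinv a n N c) s <-> \sum_m s m = ghz_target a c.
  have p0 : p 0 = false by case: p_morph.
  rewrite /Defs.support /ghz_model /ghz_target.
  by case: eqP; rewrite ?p0 ?(bool_morphism_expr _ p_morph p_dinv).
rewrite (AvN_Z_sum_support supp); apply: not_iff_compat.
split=> -[s s_ok].
  exists (fun r => \sum_(j < N) s (j, lift ord0 r)).
  apply: (ghz_assignment_solution N_gt0 sum_n_leq k_annihilates N_mod_k) => c.
  by rewrite -[RHS]s_ok (sum_ghz_ctx s).
exists (fun x => oapp s 0 (unlift ord0 x.2)) => c.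
rewrite (sum_ghz_ctx (fun x => oapp s 0 (unlift ord0 x.2))).
exact: (solution_ghz_assignment N_gt0 sum_n_leq s_ok).
Qed.
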